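(* For every $\epsilon\in(0,1)$ there is $\bar R(\epsilon)>0$ such that the following holds. Let $p,q\in\mathbb{H}^n\setminus\{0\}$, $t,\tilde t\ge1$, $R>\bar R(\epsilon)$ with $R>1$, and $r\ge\tilde r\ge t\tilde tR$ with $\tilde r\ge\epsilon r$. If $0\in\partial_tB_r(p)\cap\partial_{\tilde t}B_{\tilde r}(q)$ and $q\in\partial_tB_r(p)$, then $d(\hat p,\hat q)\ge\frac12\big(1-\sqrt{1-\epsilon^2/4}\big)$.
   Context: $\mathbb{H}^n=\mathbb{C}^n\times\mathbb{R}$ with product $(z,\tau)(w,\sigma)=(z+w,\tau+\sigma+\tfrac12\operatorname{Im}\langle z,w\rangle)$, $\langle z,w\rangle=\sum_j\overline{z_j}w_j$, identity $0$. Dilations $\delta_\lambda(z,\tau)=(\lambda z,\lambda^2\tau)$. $d(p,q)=\inf\{r>0:\delta_{1/r}(pq^{-1})\in B_{eucl}\}$ ($B_{eucl}$ the closed Euclidean unit ball in $\mathbb{R}^{2n+1}$); explicitly $d((z,\tau),(w,\sigma))=\frac1{\sqrt2}\big(\|z-w\|^2+\sqrt{\|z-w\|^4+4(\tau-\sigma-\frac12\operatorname{Im}\langle z,w\rangle)^2}\big)^{1/2}$. $B_r(p)=\{y:d(y,p)\le r\}$, $\partial B_r(p)=\{y:d(y,p)=r\}$, $\partial_tB_r(p)=\{y\in\mathbb{H}^n:d(y,\partial B_r(p))\le t\}$. For $p\ne0$, $\hat p=\delta_{1/d(p,0)}p$ is its projection to the unit sphere. *)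

From Stdlib Require Import Reals.
From mathcomp Require Import ssreflect ssrfun ssrbool eqtype ssrnat seq fintype bigop.

Open Scope R_scope.

(* A point (z, tau) of H^n = C^n x R, with z_j = hx j + i * hy j. *)
Record Hpt (n : nat) := mkH { hx : 'I_n -> R; hy : 'I_n -> R; ht : R }.
Arguments mkH {n}. Arguments hx {n}. Arguments hy {n}. Arguments ht {n}.

Definition rsum (n : nat) (f : 'I_n -> R) : R := \big[Rplus/0]_(j < n) f j.

Definition znormsq {n} (p : Hpt n) : R := rsum n (fun j => hx p j ^ 2 + hy p j ^ 2).
(* Im <z,w>, <z,w> = sum conj(z_j) w_j *)
Definition imdot {n} (p q : Hpt n) : R :=
  rsum n (fun j => hx p j * hy q j - hy p j * hx q j).

Definition H0 (n : nat) : Hpt n := mkH (fun _ => 0) (fun _ => 0) 0.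

Definition hmul {n} (p q : Hpt n) : Hpt n :=
  mkH (fun j => hx p j + hx q j) (fun j => hy p j + hy q j)
      (ht p + ht q + / 2 * imdot p q).
Definition hinv {n} (p : Hpt n) : Hpt n :=
  mkH (fun j => - hx p j) (fun j => - hy p j) (- ht p).
Definition dil {n} (l : R) (p : Hpt n) : Hpt n :=
  mkH (fun j => l * hx p j) (fun j => l * hy p j) (l ^ 2 * ht p).

Definition gauge {n} (p : Hpt n) : R :=
  / sqrt 2 * sqrt (znormsq p + sqrt (znormsq p ^ 2 + 4 * ht p ^ 2)).

Definition hdist {n} (p q : Hpt n) : R := gauge (hmul p (hinv q)).

Definition phat {n} (p : Hpt n) : Hpt n := dil (/ hdist p (H0 n)) p.

Definition sphere {n} (r : R) (p : Hpt n) (y : Hpt n) : Prop := hdist y p = r.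

(* y in ∂_t B_r(p), i.e. inf_{x in ∂B_r(p)} d(y,x) <= t
   (inf of the empty set = +infinity) *)
Definition thick_bdry {n} (t r : R) (p : Hpt n) (y : Hpt n) : Prop :=
  forall s, t < s -> exists x, sphere r p x /\ hdist y x < s.

From Stdlib Require Import Reals Lra Psatz FunctionalExtensionality.
From mathcomp Require Import ssreflect ssrfun ssrbool eqtype ssrnat seq fintype bigop.
Open Scope R_scope.

(* Put A = d(p,0), B = d(q,0) and let P, Q be the projections of p, q to the unit
   sphere.  A quasi-triangle inequality
     d(y,p) <= max(a, d(x,p)) + 5a   whenever   d(y,x) <= a
   turns the thick-boundary hypotheses into A, d(q,p) in [r - 10t, r + 10t] and
   B in [rr - 10tt, rr + 10tt], where rr >= eps r.  As p = delta_A P and q = delta_B Q,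
     p q^-1 = delta_A (P Q^-1) . (delta_A Q) (delta_B Q)^-1,
   whose first factor has gauge A d(P,Q) and whose second factor has squared gauge
   at most |A^2 - B^2|, roughly (1 - eps^2) r^2.  So if d(P,Q) were below
   (1 - sqrt(1 - eps^2/4))/2 <= eps^2/14, then d(q,p) would be at most about
   r sqrt(1 - eps^2) + eps^2 r / 2, far below r - 10t once R eps^2 >= 400. *)

Lemma eq_rsum n (f g : 'I_n -> R) : (forall j, f j = g j) -> rsum n f = rsum n g.
Proof. by move=> fg; apply: eq_bigr => j _. Qed.

Lemma rsumD n (f g : 'I_n -> R) : rsum n (fun j => f j + g j) = rsum n f + rsum n g.
Proof.
by rewrite /rsum; apply: (big_ind3 (fun x y z => x = y + z)) => [|? ? ? ? ? ? -> ->|//]; lra.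
Qed.

Lemma rsumZ n c (f : 'I_n -> R) : rsum n (fun j => c * f j) = c * rsum n f.
Proof. by rewrite /rsum (big_morph (Rmult c) (Rmult_plus_distr_l c) (Rmult_0_r c)). Qed.

Lemma rsum_le n (f g : 'I_n -> R) : (forall j, f j <= g j) -> rsum n f <= rsum n g.
Proof.
move=> fg; rewrite /rsum.
by apply: (big_ind2 (fun x y => x <= y)) => [|? ? ? ?|j _]; [lra | lra | exact: fg].
Qed.

Lemma rsum_scale n (f g : 'I_n -> R) a :
  (forall j, f j = a * g j) -> rsum n f = a * rsum n g.
Proof. by move=> fg; rewrite -rsumZ; apply: eq_rsum. Qed.

Lemma rsum_lincomb n (f g h k : 'I_n -> R) a b c :
  (forall j, f j = a * g j + b * h j + c * k j) ->
  rsum n f = a * rsum n g + b * rsum n h + c * rsum n k.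
Proof. by move=> fg; rewrite -!rsumZ -!rsumD; apply: eq_rsum. Qed.

Lemma znormsq_ge0 {n} (x : Hpt n) : 0 <= znormsq x.
Proof.
rewrite /znormsq /rsum.
by apply: (big_ind (fun y => 0 <= y)) => [|? ?|j _]; [lra | lra | nra].
Qed.

Lemma gauge_ge0 {n} (x : Hpt n) : 0 <= gauge x.
Proof.
apply: Rmult_le_pos; last exact: sqrt_pos.
by apply/Rlt_le/Rinv_0_lt_compat/sqrt_lt_R0; lra.
Qed.

Lemma gauge_eqn {n} (x : Hpt n) :
  gauge x ^ 4 = znormsq x * gauge x ^ 2 + ht x ^ 2 /\ znormsq x <= gauge x ^ 2.
Proof.
set S := znormsq x; set T := ht x; set Q := sqrt (S ^ 2 + 4 * T ^ 2).
have hS : 0 <= S := znormsq_ge0 x.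
have hQ2 : Q * Q = S ^ 2 + 4 * T ^ 2 by apply: sqrt_sqrt; nra.
have hSQ : S <= Q by rewrite -(sqrt_pow2 S hS); apply: sqrt_le_1_alt; nra.
have h2 : sqrt 2 * sqrt 2 = 2 by apply: sqrt_sqrt; lra.
have h2p : 0 < sqrt 2 by apply: sqrt_lt_R0; lra.
have hSQ2 : sqrt (S + Q) * sqrt (S + Q) = S + Q by apply: sqrt_sqrt; lra.
have hG2 : gauge x ^ 2 = (S + Q) / 2.
{ rewrite /gauge -/S -/T -/Q.
  have -> : (/ sqrt 2 * sqrt (S + Q)) ^ 2 = sqrt (S + Q) * sqrt (S + Q) / (sqrt 2 * sqrt 2).
  { by field; lra. }
  by rewrite h2 hSQ2. }
have -> : gauge x ^ 4 = (gauge x ^ 2) ^ 2 by ring.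
rewrite hG2; split; nra.
Qed.

Lemma gauge_le_iff {n} (x : Hpt n) rho : 0 <= rho ->
  gauge x <= rho <->
  znormsq x <= rho ^ 2 /\ znormsq x * rho ^ 2 + ht x ^ 2 <= rho ^ 4.
Proof.
move=> hrho; have [hN4 hSN] := gauge_eqn x; have hN := gauge_ge0 x.
have hS := znormsq_ge0 x.
set N := gauge x in hN4 hSN hN *; set S := znormsq x in hN4 hSN hS *.
have hu4 : N ^ 4 = N ^ 2 * N ^ 2 by ring.
have hv4 : rho ^ 4 = rho ^ 2 * rho ^ 2 by ring.
split=> [hle | [h1 h2]].
- have hle2 : N ^ 2 <= rho ^ 2 by apply: pow_incr; lra.
  split; first lra.
  have : 0 <= (rho ^ 2 - N ^ 2) * (rho ^ 2 + N ^ 2 - S) by apply: Rmult_le_pos; nra.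
  nra.
- apply: Rnot_lt_le => hlt.
  have hlt2 : rho ^ 2 < N ^ 2 by nra.
  nra.
Qed.

Lemma gauge_unique {n} (x : Hpt n) N : 0 <= N -> znormsq x <= N ^ 2 ->
  N ^ 4 = znormsq x * N ^ 2 + ht x ^ 2 -> gauge x = N.
Proof.
move=> hN hSN hN4; have [hG4 hSG] := gauge_eqn x; have hG := gauge_ge0 x.
have hS := znormsq_ge0 x.
suff : gauge x ^ 2 = N ^ 2 by move=> e; apply: Rsqr_inj; rewrite // /Rsqr; nra.
set u := gauge x ^ 2 in hG4 hSG *; set v := N ^ 2 in hN4 hSN *.
have hu4 : gauge x ^ 4 = u * u by rewrite /u; ring.
have hv4 : N ^ 4 = v * v by rewrite /v; ring.
nra.
Qed.

Lemma eq_gauge {n} (x y : Hpt n) :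
  znormsq x = znormsq y -> ht x ^ 2 = ht y ^ 2 -> gauge x = gauge y.
Proof. by move=> eS eT; rewrite /gauge eS eT. Qed.

Lemma gauge_dil {n} l (x : Hpt n) : 0 <= l -> gauge (dil l x) = l * gauge x.
Proof.
move=> hl; have [hN4 hSN] := gauge_eqn x; have hN := gauge_ge0 x.
have eS : znormsq (dil l x) = l ^ 2 * znormsq x.
{ by apply: rsum_scale => j /=; ring. }
apply: gauge_unique; rewrite ?eS; cbn [ht dil].
- exact: Rmult_le_pos.
- by rewrite Rpow_mult_distr; apply: Rmult_le_compat_l => //; apply: pow_le.
- have -> : (l * gauge x) ^ 4 = l ^ 4 * gauge x ^ 4 by ring.
  rewrite hN4; ring.
Qed.

Lemma hdistC {n} (x y : Hpt n) : hdist x y = hdist y x.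
Proof.
apply: eq_gauge; first by apply: eq_rsum => j /=; ring.
have E : imdot x (hinv y) = -1 * imdot y (hinv x) by apply: rsum_scale => j /=; ring.
by rewrite /= E; ring.
Qed.

Lemma hdist_x0 {n} (p : Hpt n) : hdist p (H0 n) = gauge p.
Proof.
apply: eq_gauge; first by apply: eq_rsum => j /=; ring.
have E : imdot p (hinv (H0 n)) = 0 * imdot p p by apply: rsum_scale => j /=; ring.
by rewrite /= E; ring.
Qed.

Lemma hdist_0x {n} (p : Hpt n) : hdist (H0 n) p = gauge p.
Proof. by rewrite hdistC hdist_x0. Qed.

Lemma imdotC {n} (u v : Hpt n) : imdot v u = - imdot u v.
Proof.
have -> : imdot v u = -1 * imdot u v by apply: rsum_scale => j /=; ring.
ring.
Qed.

Lemma amgm_weighted k u v : 0 < k -> 2 * u * v <= k * u ^ 2 + / k * v ^ 2.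
Proof.
move=> hk.
have -> : k * u ^ 2 + / k * v ^ 2 = 2 * u * v + / k * (k * u - v) ^ 2.
{ by field; exact: Rgt_not_eq. }
have : 0 <= / k * (k * u - v) ^ 2.
{ by apply: Rmult_le_pos; [apply/Rlt_le/Rinv_0_lt_compat | apply: pow2_ge_0]. }
lra.
Qed.

Lemma znormsq_hmul_le {n} (u v : Hpt n) k : 0 < k ->
  znormsq (hmul u v) <= (1 + k) * znormsq u + (1 + / k) * znormsq v.
Proof.
move=> hk; rewrite /znormsq -!rsumZ -rsumD; apply: rsum_le => j /=.
by have := amgm_weighted k (hx u j) (hx v j) hk; have := amgm_weighted k (hy u j) (hy v j) hk; nra.
Qed.

Lemma imdot_le {n} (u v : Hpt n) k : 0 < k ->
  imdot u v <= / 2 * (k * znormsq u + / k * znormsq v).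
Proof.
move=> hk; rewrite /imdot /znormsq -!rsumZ -rsumD -rsumZ; apply: rsum_le => j /=.
by have := amgm_weighted k (hx u j) (hy v j) hk; have := amgm_weighted k (- hy u j) (hx v j) hk; nra.
Qed.

Lemma Rabs_imdot_le {n} (u v : Hpt n) k : 0 < k ->
  Rabs (imdot u v) <= / 2 * (k * znormsq u + / k * znormsq v).
Proof.
move=> hk; apply: Rabs_le; split; last exact: imdot_le.
have := imdot_le v u (/ k) (Rinv_0_lt_compat _ hk); rewrite Rinv_inv imdotC; lra.
Qed.

(* [Sv], [Tv] and [Sw], [Tw] are [|z|^2] and [tau] of [v] and of [w = u v], where
   [gauge u <= a] and [gauge v <= b]. *)
Lemma quasi_triangle_arith a b Sv Tv Sw Tw : 0 < a -> a <= b -> 0 <= Sv ->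
  Sv * b ^ 2 + Tv ^ 2 <= b ^ 4 -> Sw <= Sv + 2 * a * b + a ^ 2 ->
  Rabs (Tw - Tv) <= a ^ 2 + a * b / 2 ->
  Sw * (b + 5 * a) ^ 2 + Tw ^ 2 <= (b + 5 * a) ^ 4.
Proof.
move=> ha hab hSv hv hSw hT.
set E := a ^ 2 + a * b / 2 in hT; set rho := b + 5 * a.
have hab0 : 0 < a * b by nra.
have hrho : rho ^ 2 - b ^ 2 = 10 * a * b + 25 * a ^ 2 by rewrite /rho; ring.
have hbrho : b ^ 2 <= rho ^ 2 by nra.
have habrho : a * b <= rho ^ 2 by nra.
have hE0 : 0 <= E by rewrite /E; nra.
have hE : E <= 3 / 2 * (a * b) by rewrite /E; nra.
have hTv2 : 0 <= Tv ^ 2 by apply: pow2_ge_0.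
have hSvb : Sv <= b ^ 2.
{ apply: (Rmult_le_reg_r (b ^ 2)); first nra.
  have -> : b ^ 2 * b ^ 2 = b ^ 4 by ring.
  lra. }
have hTv : Rabs Tv <= b ^ 2.
{ apply: Rabs_le; split; nra. }
have hTw : Tw ^ 2 <= Tv ^ 2 + 2 * b ^ 2 * E + E ^ 2.
{ have : Rabs Tw <= Rabs Tv + E.
  { have := Rabs_triang (Tw - Tv) Tv; have -> : Tw - Tv + Tv = Tw by ring.
    lra. }
  rewrite -(pow2_abs Tw) -(pow2_abs Tv); have := Rabs_pos Tw; have := Rabs_pos Tv.
  nra. }
have hSvrho : Sv * rho ^ 2 + Tv ^ 2 <= b ^ 2 * rho ^ 2.
{ have : Sv * (rho ^ 2 - b ^ 2) <= b ^ 2 * (rho ^ 2 - b ^ 2) by apply: Rmult_le_compat_r; nra.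
  nra. }
have hbE : 2 * b ^ 2 * E <= 3 * (a * b) * rho ^ 2.
{ have : b ^ 2 * E <= rho ^ 2 * (3 / 2 * (a * b)) by apply: Rmult_le_compat; nra.
  lra. }
have hE2 : E ^ 2 <= 9 / 4 * (a * b) * rho ^ 2.
{ have : E ^ 2 <= (3 / 2 * (a * b)) ^ 2 by apply: pow_incr; split; nra.
  nra. }
have hab2 : (2 * a * b + a ^ 2) * rho ^ 2 <= 3 * (a * b) * rho ^ 2 by apply: Rmult_le_compat_r; nra.
have -> : rho ^ 4 = rho ^ 2 * (b ^ 2 + (rho ^ 2 - b ^ 2)) by ring.
rewrite hrho.
have : Sw * rho ^ 2 <= (Sv + 2 * a * b + a ^ 2) * rho ^ 2 by apply: Rmult_le_compat_r; nra.
nra.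
Qed.

Lemma gauge_hmul_le {n} (u v : Hpt n) a : 0 < a -> gauge u <= a ->
  gauge (hmul u v) <= Rmax a (gauge v) + 5 * a.
Proof.
move=> ha hua; have hab : a <= Rmax a (gauge v) := Rmax_l _ _.
have := Rmax_r a (gauge v); set b := Rmax a (gauge v) in hab * => hvb.
have hb : 0 < b by lra.
have [hu1 hu2] := (gauge_le_iff u a (Rlt_le _ _ ha)).1 hua.
have [hv1 hv2] := (gauge_le_iff v b (Rlt_le _ _ hb)).1 hvb.
have hSu := znormsq_ge0 u; have hSv := znormsq_ge0 v.
(* the weight [k] balances the cross terms: [k * a ^ 2 = b ^ 2 / k = a * b] *)
pose k := b / a.
have hk : 0 < k by apply: Rdiv_lt_0_compat.
have hkSu : k * znormsq u <= a * b.
{ have -> : a * b = k * a ^ 2 by rewrite /k; field; lra.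
  by apply: Rmult_le_compat_l; lra. }
have hkSv : / k * znormsq v <= a * b.
{ have -> : a * b = / k * b ^ 2 by rewrite /k; field; lra.
  by apply: Rmult_le_compat_l; [apply/Rlt_le/Rinv_0_lt_compat | lra]. }
have hS : znormsq (hmul u v) <= znormsq v + 2 * a * b + a ^ 2.
{ have := znormsq_hmul_le u v k hk; lra. }
have hTu : Rabs (ht u) <= a ^ 2 by apply: Rabs_le; split; nra.
have hT : Rabs (ht (hmul u v) - ht v) <= a ^ 2 + a * b / 2.
{ have -> : ht (hmul u v) - ht v = ht u + / 2 * imdot u v by cbn [ht hmul]; ring.
  apply: Rle_trans (Rabs_triang _ _) _.
  rewrite Rabs_mult (Rabs_right (/ 2)); last lra.
  have := Rabs_imdot_le u v k hk; lra. }
apply/gauge_le_iff; first lra.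
split; last exact: (quasi_triangle_arith a b (znormsq v) (ht v)).
have : (a + b) ^ 2 <= (b + 5 * a) ^ 2 by apply: pow_incr; lra.
lra.
Qed.

Lemma hdist_quasi_triangle {n} (y x p : Hpt n) a : 0 < a -> hdist y x <= a ->
  hdist y p <= Rmax a (hdist x p) + 5 * a.
Proof.
move=> ha hyx.
have -> : hdist y p = gauge (hmul (hmul y (hinv x)) (hmul x (hinv p))).
{ apply: eq_gauge; first by apply: eq_rsum => j /=; ring.
  have E : imdot (hmul y (hinv x)) (hmul x (hinv p)) =
     1 * imdot y (hinv p) + (-1) * imdot y (hinv x) + (-1) * imdot x (hinv p).
  { by apply: rsum_lincomb => j /=; ring. }
  by cbn [ht hmul hinv]; rewrite E; ring. }
exact: gauge_hmul_le.
Qed.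

Lemma thick_bdry_hdist {n} t r (p y : Hpt n) : 0 < t -> 12 * t < r ->
  thick_bdry t r p y -> r - 10 * t <= hdist y p <= r + 10 * t.
Proof.
move=> ht hr /(_ (2 * t)) [|x [hxp hyx]]; first lra.
have hyx' : hdist y x <= 2 * t by lra.
have hxy : hdist x y <= 2 * t by rewrite hdistC.
have := hdist_quasi_triangle x y p (2 * t) ltac:(lra) hxy.
have := hdist_quasi_triangle y x p (2 * t) ltac:(lra) hyx'.
rewrite hxp /Rmax; do 2 case: Rle_dec => _; lra.
Qed.

Lemma dil_invK {n} l (x : Hpt n) : l <> 0 -> dil l (dil (/ l) x) = x.
Proof.
move=> hl; case: x => a b c; rewrite /dil /=; f_equal; last by field.
all: by apply: functional_extensionality => j; field.
Qed.

Lemma phat_gauge {n} (p : Hpt n) : 0 < gauge p -> gauge (phat p) = 1.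
Proof.
move=> hp; rewrite /phat hdist_x0 gauge_dil; last exact/Rlt_le/Rinv_0_lt_compat.
by field; apply: Rgt_not_eq.
Qed.

Lemma dil_gauge_phat {n} (p : Hpt n) : 0 < gauge p -> dil (gauge p) (phat p) = p.
Proof. by move=> hp; rewrite /phat hdist_x0; apply: dil_invK; apply: Rgt_not_eq. Qed.

Lemma hdist_dil_split {n} A B (P Q : Hpt n) :
  hdist (dil A P) (dil B Q) =
  gauge (hmul (dil A (hmul P (hinv Q))) (hmul (dil A Q) (hinv (dil B Q)))).
Proof.
apply: eq_gauge; first by apply: eq_rsum => j /=; ring.
have E1 : imdot (dil A P) (hinv (dil B Q)) = (A * B) * imdot P (hinv Q).
{ by apply: rsum_scale => j /=; ring. }
have E2 : imdot (dil A Q) (hinv (dil B Q)) = 0 * imdot P (hinv Q).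
{ by apply: rsum_scale => j /=; ring. }
have E3 : imdot (dil A (hmul P (hinv Q))) (hmul (dil A Q) (hinv (dil B Q)))
        = (- (A * (A - B))) * imdot P (hinv Q).
{ by apply: rsum_scale => j /=; ring. }
by cbn [ht hmul hinv dil]; rewrite E1 E2 E3; ring.
Qed.

Lemma hdist_dil_sq_le {n} A B (Q : Hpt n) : 0 <= A -> 0 <= B -> gauge Q = 1 ->
  hdist (dil A Q) (dil B Q) ^ 2 <= Rabs (A ^ 2 - B ^ 2).
Proof.
move=> hA hB hQ.
have [hQ4 hSQ] := gauge_eqn Q; rewrite hQ !pow1 Rmult_1_r in hQ4; rewrite hQ pow1 in hSQ.
have hS := znormsq_ge0 Q.
set D := A ^ 2 - B ^ 2.
have eS : znormsq (hmul (dil A Q) (hinv (dil B Q))) = (A - B) ^ 2 * znormsq Q.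
{ by apply: rsum_scale => j /=; ring. }
have eT : ht (hmul (dil A Q) (hinv (dil B Q))) = D * ht Q.
{ have E : imdot (dil A Q) (hinv (dil B Q)) = 0 * imdot Q Q by apply: rsum_scale => j /=; ring.
  by cbn [ht hmul hinv dil]; rewrite E /D; ring. }
have hAB : (A - B) ^ 2 <= Rabs D.
{ by rewrite /D; case: (Rle_dec A B) => hc; [rewrite Rabs_left1 | rewrite Rabs_right]; nra. }
have hD := Rabs_pos D; have hD2 : Rabs D ^ 2 = D ^ 2 := pow2_abs D.
have hrho : sqrt (Rabs D) ^ 2 = Rabs D by apply/pow2_sqrt.
have hle : hdist (dil A Q) (dil B Q) <= sqrt (Rabs D).
{ apply/gauge_le_iff; first exact: sqrt_pos.
  have -> : sqrt (Rabs D) ^ 4 = (sqrt (Rabs D) ^ 2) ^ 2 by ring.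
  rewrite eS eT hrho hD2; split.
  - have : (A - B) ^ 2 * znormsq Q <= (A - B) ^ 2 * 1.
    { by apply: Rmult_le_compat_l; [apply: pow2_ge_0 | lra]. }
    lra.
  - have : (A - B) ^ 2 * znormsq Q * Rabs D <= Rabs D * znormsq Q * Rabs D.
    { by apply: Rmult_le_compat_r => //; apply: Rmult_le_compat_r. }
    have : Rabs D * Rabs D = D ^ 2 by rewrite -hD2; ring.
    have : D ^ 2 = D ^ 2 * znormsq Q + D ^ 2 * ht Q ^ 2.
    { by rewrite -Rmult_plus_distr_l -hQ4; ring. }
    nra. }
by rewrite -hrho; apply: pow_incr; split; [exact: gauge_ge0 | exact: hle].
Qed.

Lemma hdist_le_phat {n} (p q : Hpt n) c : 0 < gauge p -> 0 < gauge q -> 0 < c ->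
  hdist (phat p) (phat q) <= c ->
  hdist q p <= Rmax (gauge p * c) (hdist (dil (gauge p) (phat q)) (dil (gauge q) (phat q)))
               + 5 * (gauge p * c).
Proof.
move=> hp hq hc hpq.
have -> : hdist q p =
  gauge (hmul (dil (gauge p) (hmul (phat p) (hinv (phat q))))
              (hmul (dil (gauge p) (phat q)) (hinv (dil (gauge q) (phat q))))).
{ by rewrite hdistC -hdist_dil_split !dil_gauge_phat. }
apply: gauge_hmul_le; first exact: Rmult_lt_0_compat.
rewrite gauge_dil; last lra.
by apply: Rmult_le_compat_l; first lra.
Qed.

Lemma sqrt_gap_bounds eps : 0 < eps < 1 ->
  0 < / 2 * (1 - sqrt (1 - eps ^ 2 / 4)) <= eps ^ 2 / 14.
Proof.
move=> he; set s := sqrt (1 - eps ^ 2 / 4).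
have he2 : 0 < eps ^ 2 < 1 by split; nra.
have hs2 : s * s = 1 - eps ^ 2 / 4 by apply: sqrt_sqrt; lra.
have hs0 : 0 <= s := sqrt_pos _.
have hs34 : 3 / 4 <= s by nra.
split; nra.
Qed.

Lemma thick_radii_incompatible eps R t tt r rr c A B D G :
  0 < eps < 1 -> 1 <= t -> 1 <= tt -> 400 <= R * eps ^ 2 ->
  rr <= r -> t * tt * R <= rr -> eps * r <= rr ->
  r - 10 * t <= A <= r + 10 * t -> rr - 10 * tt <= B <= rr + 10 * tt ->
  r - 10 * t <= D -> D <= Rmax (A * c) G + 5 * (A * c) ->
  G ^ 2 <= Rabs (A ^ 2 - B ^ 2) -> 0 < c <= eps ^ 2 / 14 -> False.
Proof.
move=> he ht htt hRe hrr httR her hA hB hD hDG hG2 hc.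
have he2 : 0 < eps ^ 2 < 1 by split; nra.
have htt0 : 1 <= t * tt by nra.
have httr : 400 * (t * tt) <= eps ^ 2 * r.
{ have : t * tt * 400 <= t * tt * (R * eps ^ 2) by apply: Rmult_le_compat_l; lra.
  have : t * tt * R * eps ^ 2 <= r * eps ^ 2 by apply: Rmult_le_compat_r; lra.
  lra. }
have hr0 : 0 < r by nra.
have her2 : eps ^ 2 * r <= eps * r by apply: Rmult_le_compat_r; nra.
have her1 : eps * r <= r by nra.
have htt1 : t <= t * tt /\ tt <= t * tt by split; nra.
have hte : t * eps ^ 2 <= t by nra.
have hAc : A * c <= (r + 10 * t) * (eps ^ 2 / 14) by apply: Rmult_le_compat; lra.
move: hDG; rewrite /Rmax; case: Rle_dec => _ hDG; last by lra.
have hL : r - 14 * t - 5 / 14 * (eps ^ 2 * r) <= G by lra.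
have hG : (r - 14 * t - 5 / 14 * (eps ^ 2 * r)) ^ 2 <= G ^ 2 by apply: pow_incr; lra.
have hrt : 100 * t ^ 2 <= 5 * r * t /\ 100 * tt ^ 2 <= 5 * r * tt by split; nra.
have hertt : eps * r * tt <= r * tt by nra.
have hr2 : 0 <= (1 - eps ^ 2) * r ^ 2 by nra.
have hABr : Rabs (A ^ 2 - B ^ 2) <= (1 - eps ^ 2) * r ^ 2 + 25 * r * t + 25 * r * tt.
{ have : A ^ 2 <= (r + 10 * t) ^ 2 by apply: pow_incr; lra.
  have : (eps * r - 10 * tt) ^ 2 <= B ^ 2 by apply: pow_incr; lra.
  have : B ^ 2 <= (r + 10 * tt) ^ 2 by apply: pow_incr; lra.
  have : (r - 10 * t) ^ 2 <= A ^ 2 by apply: pow_incr; lra.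
  have : 0 <= tt ^ 2 /\ 0 <= t ^ 2 by split; apply: pow2_ge_0.
  move=> *; apply: Rabs_le; split; lra. }
have hM : 0 <= (14 * t + 5 / 14 * (eps ^ 2 * r)) ^ 2 by apply: pow2_ge_0.
have : r * (4 / 14 * (eps ^ 2 * r)) <= r * (53 * t + 25 * tt) by lra.
move/(Rmult_le_reg_l _ _ _ hr0); lra.
Qed.

Lemma large_radius_scale eps R t tt rr : 0 < eps < 1 -> 1 <= t -> 1 <= tt -> 1 < R ->
  400 <= R * eps ^ 2 -> t * tt * R <= rr -> 12 * t < rr /\ 12 * tt < rr.
Proof.
move=> he ht htt hR1 hRe httR.
have hR : 400 <= R by have := Rmult_le_compat_l R (eps ^ 2) 1 ltac:(lra) ltac:(nra); lra.
have htt1 : t <= t * tt /\ tt <= t * tt by split; nra.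
have := Rmult_le_compat_l (t * tt) 400 R ltac:(nra) hR; lra.
Qed.

Theorem lemma11 (n : nat) :
  forall eps : R, 0 < eps < 1 ->
  exists Rbar : R, 0 < Rbar /\
  forall (p q : Hpt n) (t tt R r rr : R),
    p <> H0 n -> q <> H0 n ->
    1 <= t -> 1 <= tt ->
    Rbar < R -> 1 < R ->
    rr <= r -> t * tt * R <= rr -> eps * r <= rr ->
    thick_bdry t r p (H0 n) -> thick_bdry tt rr q (H0 n) ->
    thick_bdry t r p q ->
    hdist (phat p) (phat q) >= / 2 * (1 - sqrt (1 - eps ^ 2 / 4)).
Proof.
move=> eps he; have he2 : 0 < eps ^ 2 < 1 by split; nra.
exists (400 / eps ^ 2); split; first by apply: Rdiv_lt_0_compat; lra.
move=> p q t tt R r rr _ _ ht htt hRb hR1 hrr httR her hp0 hq0 hqp.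
have hRe : 400 <= R * eps ^ 2.
{ have -> : 400 = 400 / eps ^ 2 * eps ^ 2 by field; lra.
  by apply: Rmult_le_compat_r; lra. }
have [h12t h12tt] := large_radius_scale eps R t tt rr he ht htt hR1 hRe httR.
have hA := thick_bdry_hdist t r p (H0 n) ltac:(lra) ltac:(lra) hp0.
have hB := thick_bdry_hdist tt rr q (H0 n) ltac:(lra) ltac:(lra) hq0.
have [hD _] := thick_bdry_hdist t r p q ltac:(lra) ltac:(lra) hqp.
rewrite hdist_0x in hA; rewrite hdist_0x in hB.
have hc := sqrt_gap_bounds eps he; set c := / 2 * (1 - _) in hc *.
apply: Rnot_lt_ge => hpq.
have hp : 0 < gauge p by case: hA; lra.
have hq : 0 < gauge q by case: hB; lra.
apply: (thick_radii_incompatible eps R t tt r rr c (gauge p) (gauge q) (hdist q p)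
         (hdist (dil (gauge p) (phat q)) (dil (gauge q) (phat q)))) => //.
- by apply: hdist_le_phat => //; lra.
- by apply: hdist_dil_sq_le; [lra | lra | exact: phat_gauge].
Qed.
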